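(* Let $k\ge 2$ and $n\ge k+1$ be integers. The minimum of ${\rm cc}(G)$ over all $k$-connected graphs $G$ of order $n$ equals $\min\{n,3k\}$. That is, every $k$-connected graph $G$ of order $n$ satisfies ${\rm cc}(G)\ge \min\{n,3k\}$, and some $k$-connected graph of order $n$ attains equality.
   Context: All graphs are finite and simple. A cummerbund of a graph is a longest cycle in it. The cummerbund covering number ${\rm cc}(G)$ is the number of vertices of $G$ that lie in at least one cummerbund. *)

From mathcomp Require Import all_boot.
From mathcomp Require Import boolp.

Set Implicit Arguments.
Unset Strict Implicit.
Unset Printing Implicit Defensive.

Definition simple_graph (T : finType) (e : rel T) : Prop :=
  irreflexive e /\ symmetric e.

Definition connected_outside (T : finType) (e : rel T) (X : {set T}) : Prop :=
  forall u v : T, u \notin X -> v \notin X ->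
    connect (fun x y => [&& e x y, x \notin X & y \notin X]) u v.

Definition k_connected (T : finType) (e : rel T) (k : nat) : Prop :=
  k < #|T| /\ forall X : {set T}, #|X| < k -> connected_outside e X.

Definition is_cycle (T : finType) (e : rel T) (c : seq T) : Prop :=
  ucycle e c /\ 3 <= size c.

Definition cummerbund (T : finType) (e : rel T) (c : seq T) : Prop :=
  is_cycle e c /\ forall c' : seq T, is_cycle e c' -> size c' <= size c.

Definition cc (T : finType) (e : rel T) : nat :=
  #|[set v : T | `[< exists c : seq T, cummerbund e c /\ v \in c >]]|.

From mathcomp Require Import all_boot.
From mathcomp Require Import boolp.
From mathcomp Require Import zify.

Set Implicit Arguments.
Unset Strict Implicit.
Unset Printing Implicit Defensive.

(* If some vertex x lies on no longest cycle, take a longest cycle C, the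
   component H of G - C containing x, and the set N of vertices of C with a
   neighbour in H.  No two consecutive vertices of C lie in N, since a path
   through H would lengthen C.  If no two vertices at distance 2 on C lie in N
   either, then |C| >= 3|N| >= 3k, because N separates x from the rest of C.
   Otherwise, for consecutive a, m, b on C with a, b in N, the detour from a to
   b through H is a single vertex h, and replacing m by h yields a longest
   cycle whose component containing x lies in H minus h; induct on |H|.  Equality holds for
   K_n when n <= 3k, and otherwise for the join of K_k with k disjoint edges
   and n - 3k isolated vertices: its longest cycles have 3k vertices and miss
   the isolated ones. *)

Section SeqCycles.
Variable T : eqType.

Lemma count_sum (a : pred T) s : count a s = \sum_(v <- s) a v.
Proof. by rewrite -sumn_count sumnE big_map. Qed.

Section UniqSeq.
Variable c : seq T.
Hypothesis c_uniq : uniq c.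

Lemma perm_map_next : perm_eq (map (next c) c) c.
Proof.
apply: uniq_perm => //; first by rewrite (map_inj_uniq (can_inj (prev_next c_uniq))).
move=> y; apply/mapP/idP => [[z zc ->]|yc]; first by rewrite mem_next.
by exists (prev c y); rewrite ?mem_prev ?next_prev.
Qed.

Lemma perm_map_prev : perm_eq (map (prev c) c) c.
Proof.
apply: uniq_perm => //; first by rewrite (map_inj_uniq (can_inj (next_prev c_uniq))).
move=> y; apply/mapP/idP => [[z zc ->]|yc]; first by rewrite mem_prev.
by exists (next c y); rewrite ?mem_next ?prev_next.
Qed.

Lemma count_next (a : pred T) : count (preim (next c) a) c = count a c.
Proof. by rewrite -count_map (permP perm_map_next). Qed.

Lemma count_prev (a : pred T) : count (preim (prev c) a) c = count a c.
Proof. by rewrite -count_map (permP perm_map_prev). Qed.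

Lemma next_neq_prev v : 3 <= size c -> v \in c -> next c v != prev c v.
Proof.
move=> c_ge3 /rot_to[i [|w [|u s]] c_rot]; have := size_rot i c;
  rewrite c_rot => c_size; rewrite -c_size // in c_ge3.
have rot_uniq : uniq [:: v, w, u & s] by rewrite -c_rot rot_uniq.
have next_v : next c v = w by rewrite -(next_rot i c_uniq) c_rot /= eqxx.
have next_w : next c w = u.
  have vw : v != w by move: rot_uniq; rewrite /= inE negb_or => /andP[/andP[]].
  by rewrite -(next_rot i c_uniq) c_rot /= eq_sym (negbTE vw) eqxx.
apply: contraTneq rot_uniq => next_prev_v.
have : next c (next c v) = v by rewrite {1}next_prev_v next_prev.
by rewrite next_v next_w => ->; rewrite /= !inE eqxx orbT.
Qed.

Lemma count_spaced (a : pred T) :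
    {in c, forall v, a v -> ~~ a (next c v) && ~~ a (next c (next c v))} ->
  3 * count a c <= size c.
Proof.
move=> spaced; have -> : 3 * count a c = count a c + count (preim (next c) a) c
    + count (preim (next c) (preim (next c) a)) c by rewrite !count_next; lia.
rewrite !count_sum -!big_split /= -sum1_size big_seq.
rewrite [X in _ <= X]big_seq; apply: leq_sum => v vc.
case av: (a v); first by case/andP: (spaced v vc av) => /negbTE-> /negbTE->.
case anv: (a (next c v)); last by case: (a _).
have nvc : next c v \in c by rewrite mem_next.
by case/andP: (spaced _ nvc anv) => /negbTE->.
Qed.

End UniqSeq.

Lemma ucycle_splice (e : rel T) a s1 b s2 q :
    ucycle e (a :: s1 ++ b :: s2) -> uniq q ->
    {in q, forall y, y \notin a :: s1 ++ b :: s2} ->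
    path e a q -> e (last a q) b -> ucycle e (a :: q ++ b :: s2).
Proof.
move=> /andP[cyc c_uniq] q_uniq q_out a_q q_b; apply/andP; split.
  move: cyc; rewrite /cycle -!cats1 -!catA !cat_path /=.
  by case/and4P=> _ /andP[_ ->] -> _; rewrite a_q q_b.
move: c_uniq; rewrite -cat_cons cat_uniq => /and3P[/andP[a_s1 _] /hasPn b_s2 u2].
rewrite -cat_cons cat_uniq u2 andbT; apply/andP; split.
  by rewrite cons_uniq q_uniq andbT; apply/negP=> /q_out; rewrite inE eqxx.
apply/hasPn=> y y_bs2; rewrite inE negb_or; apply/andP; split.
  by move: (b_s2 _ y_bs2); rewrite inE negb_or => /andP[].
by apply/negP=> /q_out; rewrite inE mem_cat y_bs2 !orbT.
Qed.

End SeqCycles.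

Section Connect.
Variables (T : finType) (r : rel T).

Lemma connect_invariant (S : pred T) x y :
  (forall u v, S u -> r u v -> S v) -> S x -> connect r x y -> S y.
Proof.
move=> S_r Sx /connectP[p + ->]; elim: p x Sx => //= z p IH x Sx /andP[xz zp].
exact: IH (S_r _ _ Sx xz) zp.
Qed.

Lemma path_all (Q : pred T) x p :
  (forall u v, r u v -> Q v) -> path r x p -> all Q p.
Proof.
move=> r_Q; elim: p x => //= z p IH x /andP[xz zp].
by rewrite (r_Q _ _ xz) (IH z zp).
Qed.

Lemma connect_exit (P : pred T) x y : connect r x y -> P x -> ~~ P y ->
  exists u v, [/\ connect [rel a b | [&& r a b, P a & P b]] x u, P u, r u v & ~~ P v].
Proof.
move=> /connectP[p + ->]; elim: p x => [|z p IH] x /=; first by move=> _ ->.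
case/andP=> xz zp Px Pl; case Pz: (P z); last by exists x, z; rewrite Pz.
have [u [v [zu Pu uv Pv]]] := IH z zp Pz Pl.
exists u, v; split=> //; apply: connect_trans zu; apply: connect1.
by rewrite /= xz Px Pz.
Qed.

End Connect.

Section Cycles.
Variables (T : finType) (e : rel T).

Lemma cycle_size_le_card c : is_cycle e c -> size c <= #|T|.
Proof. by case=> /andP[_ /card_uniqP <-] _; apply: max_card. Qed.

Lemma cummerbund_exists c : is_cycle e c -> exists C, cummerbund e C.
Proof.
move=> c_cycle; pose P m := `[< exists c, is_cycle e c /\ size c = m >].
have P_size : P (size c) by apply/asboolP; exists c.
have P_bound m : P m -> m <= #|T| by move=> /asboolP[c' [/cycle_size_le_card le <-]].
case: (ex_maxnP (ex_intro P _ P_size) P_bound) => m /asboolP[C [C_cycle <-]] C_max.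
by exists C; split=> // c' c'_cycle; apply: C_max; apply/asboolP; exists c'.
Qed.

Lemma cummerbund_rot i C : cummerbund e C -> cummerbund e (rot i C).
Proof. by rewrite /cummerbund /is_cycle rot_ucycle size_rot. Qed.

Lemma cummerbund_size_le_cc C : cummerbund e C -> size C <= cc e.
Proof.
move=> C_cummerbund; have [/andP[_ C_uniq] _] := C_cummerbund.1.
rewrite -(card_uniqP C_uniq); apply: subset_leq_card; apply/subsetP=> v vC.
by rewrite inE; apply/asboolP; exists C.
Qed.

Lemma k_connected_neighbour k (X : {set T}) v : k_connected e k -> #|X| < k ->
  v \notin X -> exists2 w, e v w & w \notin X.
Proof.
move=> [k_lt conn] X_lt vX.
have /subsetPn[z _ zX] : ~~ ([set: T] \subset v |: X).
  apply: contraTN k_lt => /subset_leq_card; rewrite cardsT cardsU1; lia.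
move: zX; rewrite in_setU1 negb_or => /andP[zv zX].
have /connectP[[|w p] /= + z_last] := conn X X_lt v z vX zX.
  by move: zv; rewrite z_last eqxx.
by case/andP=> /and3P[vw _ wX] _; exists w.
Qed.

Lemma k_connected_cycle k : simple_graph e -> 2 <= k -> k_connected e k ->
  exists c, is_cycle e c.
Proof.
move=> [e_irr e_sym] k_ge2 e_conn.
have small0 : #|@set0 T| < k by rewrite cards0; lia.
have small1 (a : T) : #|[set a]| < k by rewrite cards1; lia.
have [v _] : exists v, v \in [set: T].
  by apply/set0Pn; rewrite -card_gt0 cardsT; case: e_conn; lia.
have [u vu _] := k_connected_neighbour e_conn small0 (negbT (in_set0 v)).
have off_v y : e v y -> y \notin [set v].
  by rewrite in_set1; apply: contraTneq => ->; rewrite e_irr.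
have vNu : v \notin [set u] by rewrite in_set1 eq_sym -in_set1 off_v.
have [w vw] := k_connected_neighbour e_conn (small1 u) vNu; rewrite in_set1 => wu.
have /connectP[_ /shortenP[p up uniq_p _] last_p] :=
  e_conn.2 _ (small1 v) u w (off_v _ vu) (off_v _ vw).
have /allP p_off : all (fun y => y \notin [set v]) (u :: p).
  by rewrite /= off_v //; apply: path_all up => a b /and3P[].
case: p up uniq_p last_p p_off => [|z p] up uniq_p /= last_p p_off.
  by rewrite last_p eqxx in wu.
exists [:: v, u, z & p]; split=> //; apply/andP; split.
  rewrite /cycle rcons_path /= vu -last_p [e w v]e_sym vw andbT.
  by apply: sub_path up => a b /and3P[].
by rewrite cons_uniq uniq_p andbT; apply/negP=> /p_off; rewrite in_set1 eqxx.
Qed.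

End Cycles.

Section LowerBound.
Variables (T : finType) (e : rel T) (k : nat).
Hypotheses (e_sym : symmetric e)
  (e_conn : forall X : {set T}, #|X| < k -> connected_outside e X).
Variable x : T.
Hypothesis x_off : forall C, cummerbund e C -> x \notin C.

Definition avoid (C : seq T) : rel T := [rel u v | [&& e u v, u \notin C & v \notin C]].
Definition component C := [set v | connect (avoid C) x v].
Definition attach C := [set a in C | [exists h in component C, e a h]].

Lemma attach_sub C : {subset attach C <= C}.
Proof. by move=> a; rewrite inE => /andP[]. Qed.

Lemma avoid_sym C : symmetric (avoid C).
Proof. by move=> u v; rewrite /avoid /= e_sym [(u \notin C) && _]andbC. Qed.

Lemma component_eq_mem C D : C =i D -> component C = component D.
Proof.
move=> CD; apply/setP=> v; rewrite !inE; apply: eq_connect => u w.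
by rewrite /avoid /= !CD.
Qed.

Lemma attach_eq_mem C D : C =i D -> attach C = attach D.
Proof. by move=> CD; apply/setP=> v; rewrite !inE CD (component_eq_mem CD). Qed.

Lemma component_notin C v : x \notin C -> v \in component C -> v \notin C.
Proof.
move=> xC; rewrite inE; apply: (connect_invariant (S := [pred y | y \notin C])) => //.
by move=> u w _ /and3P[].
Qed.

Lemma component_connect C u v :
  u \in component C -> v \in component C -> connect (avoid C) u v.
Proof.
rewrite !inE => xu; apply: connect_trans.
by rewrite (sym_connect_sym (@avoid_sym C)).
Qed.

Lemma attach_outside C (X : {set T}) v : x \notin C -> #|X| < k -> x \notin X ->
  v \in C -> v \notin X -> exists2 a, a \in attach C & a \notin X.
Proof.
move=> xC X_lt xX vC vX.
have [u [w [xu uC /and3P[uw _ wX] wC]]] :=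
  connect_exit (P := [pred y | y \notin C]) (e_conn X_lt xX vX) xC (introT negPn vC).
exists w => //; rewrite /= negbK in wC; rewrite inE wC /=.
apply/exists_inP; exists u; last by rewrite e_sym.
rewrite inE; apply: connect_sub xu => a b /and3P[/and3P[ab _ _] /= aC bC].
by apply: connect1; rewrite /avoid /= ab aC bC.
Qed.

Lemma attach_detour a s1 b s2 : cummerbund e (a :: s1 ++ b :: s2) ->
    a \in attach (a :: s1 ++ b :: s2) -> b \in attach (a :: s1 ++ b :: s2) ->
  exists h p, [/\ h \in component (a :: s1 ++ b :: s2),
                  ucycle e (a :: h :: p ++ b :: s2) & size p < size s1].
Proof.
set C := a :: s1 ++ b :: s2 => C_cummerbund.
have xC := x_off C_cummerbund; have [[C_ucycle _] C_max] := C_cummerbund.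
rewrite !inE => /andP[_ /exists_inP[h ha ah]] /andP[_ /exists_inP[h' hb bh']].
have /connectP[_ /shortenP[p hp p_uniq _] h'_last] := component_connect ha hb.
have /allP p_off : all [pred y | y \notin C] (h :: p).
  by rewrite /= (component_notin xC ha); apply: path_all hp => u v /and3P[].
have hp_cycle : ucycle e (a :: (h :: p) ++ b :: s2).
  apply: (ucycle_splice (s1 := s1)) => //=.
  - by rewrite ah; apply: sub_path hp => u v /and3P[].
  - by rewrite -h'_last e_sym.
have hp_ge3 : 3 <= size (a :: (h :: p) ++ b :: s2) by rewrite /= size_cat addnS.
exists h, p; split=> //; have := C_max _ (conj hp_cycle hp_ge3).
by rewrite /C /= !size_cat /= !addnS !ltnS ltn_add2r.
Qed.

Lemma cummerbund_rot_to C a : cummerbund e C -> a \in C ->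
  exists m b s, [/\ cummerbund e [:: a, m, b & s], [:: a, m, b & s] =i C,
    size [:: a, m, b & s] = size C, next C a = m & next C m = b].
Proof.
move=> C_cummerbund /rot_to[i s' C_rot].
have := cummerbund_rot i C_cummerbund; rewrite C_rot => rot_cummerbund.
have [[/andP[_ C_uniq] C_ge3] _] := C_cummerbund.
have := size_rot i C; rewrite C_rot.
case: s' C_rot rot_cummerbund => [|m [|b s]] C_rot rot_cummerbund rot_size;
  rewrite -rot_size // in C_ge3.
have rot_uniq : uniq [:: a, m, b & s] by rewrite -C_rot rot_uniq.
have am : a != m by move: rot_uniq; rewrite /= inE negb_or => /andP[/andP[]].
exists m, b, s; split=> //; first by move=> y; rewrite -C_rot mem_rot.
  by rewrite -(next_rot i C_uniq) C_rot /= eqxx.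
by rewrite -(next_rot i C_uniq) C_rot /= eq_sym (negbTE am) eqxx.
Qed.

Lemma next_attach C a : cummerbund e C -> a \in attach C -> next C a \notin attach C.
Proof.
move=> C_cummerbund aN.
have [m [b [s [rot_cummerbund rot_mem _ -> _]]]] :=
  cummerbund_rot_to C_cummerbund (attach_sub aN).
rewrite -!(attach_eq_mem rot_mem) in aN *; apply/negP=> mN.
have [_ [p [_ _]]] := attach_detour (s1 := [::]) rot_cummerbund aN mN.
by rewrite ltn0.
Qed.

Lemma attach_card C : cummerbund e C -> k <= #|attach C|.
Proof.
move=> C_cummerbund; have xC := x_off C_cummerbund.
have [v vC vN] : exists2 v, v \in C & v \notin attach C.
  have [[_ C_ge3] _] := C_cummerbund.
  have [c0 c0C] : exists c0, c0 \in C.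
    by case: (C) C_ge3 => // c0 s; exists c0; apply: mem_head.
  have [c0N|] := boolP (c0 \in attach C); last by exists c0.
  by exists (next C c0); rewrite ?mem_next ?next_attach.
rewrite leqNgt; apply/negP=> N_lt.
have [a aN] := attach_outside xC N_lt (contra (@attach_sub C x) xC) vC vN.
by rewrite aN.
Qed.

Lemma attach_spaced_size C : cummerbund e C ->
  {in attach C, forall a, next C (next C a) \notin attach C} -> 3 * k <= size C.
Proof.
move=> C_cummerbund spaced; have [[/andP[_ C_uniq] _] _] := C_cummerbund.
apply: leq_trans (leq_mul (leqnn 3) (attach_card C_cummerbund)) _.
have -> : #|attach C| = count (mem (attach C)) C.
  rewrite -size_filter -(card_uniqP (filter_uniq _ C_uniq)); apply: eq_card => a.
  by rewrite mem_filter andb_idr //; apply: attach_sub.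
apply: count_spaced => // a _ aN.
by rewrite next_attach // spaced.
Qed.

Lemma component_subset C D : x \notin C ->
    (forall w, w \in C -> w \notin D -> w \notin attach C) ->
  component D \subset component C.
Proof.
move=> xC CD_off; apply/subsetP=> v; rewrite [v \in component D]inE.
apply: (connect_invariant (S := mem (component C))); last by rewrite /= inE connect0.
move=> u w /= uN /and3P[uw _ wD].
have wC : w \notin C.
  apply/negP=> wC; have := CD_off w wC wD; rewrite inE wC /=.
  by move/exists_inPn/(_ u uN); rewrite e_sym uw.
have uC := component_notin xC uN; rewrite inE in uN; rewrite inE.
by apply: connect_trans uN (connect1 _); rewrite /avoid /= uw uC wC.
Qed.

Lemma cummerbund_swap a m b s : cummerbund e [:: a, m, b & s] ->
    a \in attach [:: a, m, b & s] -> b \in attach [:: a, m, b & s] ->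
  exists2 C2, cummerbund e C2 /\ size C2 = size [:: a, m, b & s]
            & #|component C2| < #|component [:: a, m, b & s]|.
Proof.
set C := [:: a, m, b & s] => C_cummerbund aN bN.
have xC := x_off C_cummerbund; have [_ C_max] := C_cummerbund.
have [h [[|? ?] [hN C2_ucycle]]] // := attach_detour (s1 := [:: m]) C_cummerbund aN bN.
set C2 := [:: a, h, b & s] in C2_ucycle.
have C2_cummerbund : cummerbund e C2 by split=> // c /C_max.
exists C2 => //; have xC2 := x_off C2_cummerbund.
have mN : m \notin attach C by have := next_attach C_cummerbund aN; rewrite /= eqxx.
have C_C2 w : w \in C -> w \notin C2 -> w \notin attach C.
  move=> wC wC2; suff -> : w = m by [].
  move: wC wC2; rewrite !inE !negb_or => + /and4P[wa _ wb ws].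
  by rewrite (negbTE wa) (negbTE wb) (negbTE ws) /= orbF => /eqP.
have /subset_leq_card : component C2 \subset component C :\ h.
  apply/subsetP=> v vC2; rewrite in_setD1 (subsetP (component_subset xC C_C2)) // andbT.
  by apply: contraTneq (component_notin xC2 vC2) => ->; rewrite !inE eqxx orbT.
by rewrite (cardsD1 h (component C)) hN.
Qed.

Lemma cummerbund_size_lb C : cummerbund e C -> 3 * k <= size C.
Proof.
have [N] := ubnP #|component C|; elim: N C => // N IH C component_lt C_cummerbund.
have [spaced|] := boolP [forall a in attach C, next C (next C a) \notin attach C].
  by apply: attach_spaced_size => // a; apply: (forall_inP spaced).
case/forall_inPn=> a aN /negPn bN.
have [m [b [s [rot_cummerbund rot_mem rot_size next_a next_m]]]] :=
  cummerbund_rot_to C_cummerbund (attach_sub aN).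
rewrite next_a next_m in bN; rewrite -!(attach_eq_mem rot_mem) in aN bN.
have [C2 [C2_cummerbund C2_size] component_lt2] := cummerbund_swap rot_cummerbund aN bN.
rewrite -rot_size -C2_size; apply: IH C2_cummerbund.
by rewrite (component_eq_mem rot_mem) in component_lt2; apply: leq_trans component_lt2 _.
Qed.

End LowerBound.

Lemma cc_lower_bound (T : finType) (e : rel T) k : 2 <= k -> simple_graph e ->
  k_connected e k -> minn #|T| (3 * k) <= cc e.
Proof.
move=> k_ge2 e_simple e_conn; rewrite /cc; set covered := [set v | _].
have [/subset_leq_card|/subsetPn[x _ x_uncovered]] := boolP ([set: T] \subset covered).
  by rewrite cardsT geq_min => ->.
have x_off C : cummerbund e C -> x \notin C.
  move=> C_cummerbund; apply: contra x_uncovered => xC.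
  by rewrite inE; apply/asboolP; exists C.
have [c c_cycle] := k_connected_cycle e_simple k_ge2 e_conn.
have [C C_cummerbund] := cummerbund_exists c_cycle.
have := cummerbund_size_lb e_simple.2 e_conn.2 x_off C_cummerbund.
move=> /leq_trans/(_ (cummerbund_size_le_cc C_cummerbund)).
by rewrite geq_min => ->; rewrite orbT.
Qed.

Definition complete_graph (T : finType) : rel T := fun u v => u != v.

Lemma complete_graph_simple (T : finType) : simple_graph (@complete_graph T).
Proof. by split=> [u|u v]; rewrite /complete_graph ?eqxx // eq_sym. Qed.

Lemma complete_graph_k_connected (T : finType) k : k < #|T| ->
  k_connected (@complete_graph T) k.
Proof.
move=> k_lt; split=> // X _ u v uX vX.
have [->|uv] := eqVneq u v; first exact: connect0.
by apply: connect1; rewrite /complete_graph /= uv uX vX.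
Qed.

Lemma path_iota (r : rel nat) a m :
  (forall i, a <= i < a + m -> r i i.+1) -> path r a (iota a.+1 m).
Proof.
elim: m a => //= m IH a r_succ; rewrite r_succ ?IH //; last by lia.
by move=> i i_range; apply: r_succ; lia.
Qed.

Lemma last_iota a m : last a (iota a.+1 m) = a + m.
Proof. by elim: m a => [|m IH] a /=; rewrite ?addn0 // IH addnS. Qed.

Lemma cycle_iota (r : rel nat) m : 0 < m ->
  (forall i, i.+1 < m -> r i i.+1) -> r m.-1 0 -> cycle r (iota 0 m).
Proof.
case: m => // m _ r_succ r_last; rewrite /cycle /= rcons_path last_iota r_last andbT.
by apply: path_iota => i /andP[_ ?]; apply: r_succ.
Qed.

Section TripleGraph.
Variables (n k : nat).
Hypotheses (k_ge2 : 1 < k) (k_le : 3 * k <= n).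

(* The join of the clique on the k hubs 0, 3, ..., 3k - 3 with the k disjoint
   edges {3t + 1, 3t + 2} and the n - 3k isolated vertices 3k, ..., n - 1. *)
Definition hub (i : nat) := (i < 3 * k) && (i %% 3 == 0).

Definition triple_adj (i j : nat) :=
  (i != j) && [|| hub i, hub j | [&& i < 3 * k, j < 3 * k & i %/ 3 == j %/ 3]].

Definition triple_graph : rel 'I_n := relpre val triple_adj.

Lemma triple_adj_sym : symmetric triple_adj.
Proof.
move=> i j; rewrite /triple_adj eq_sym [j %/ 3 == _]eq_sym.
by case: (hub i); case: (hub j); case: (i < 3 * k); case: (j < 3 * k).
Qed.

Lemma triple_graph_simple : simple_graph triple_graph.
Proof.
by split=> [i|i j]; [rewrite /triple_graph /= /triple_adj eqxx | apply: triple_adj_sym].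
Qed.

Fact hub_vertex_subproof (t : 'I_k) : 3 * t < n.
Proof. by have := ltn_ord t; lia. Qed.

Definition hub_vertex (t : 'I_k) : 'I_n := Ordinal (hub_vertex_subproof t).

Lemma hubs_image : [set v : 'I_n | hub v] = [set hub_vertex t | t : 'I_k].
Proof.
apply/setP=> v; rewrite inE; apply/idP/imsetP=> [/andP[v_lt v_mod]|[t _ ->]].
  have t_lt : v %/ 3 < k by lia.
  by exists (Ordinal t_lt) => //; apply: val_inj => /=; lia.
by rewrite /hub /=; have := ltn_ord t; lia.
Qed.

Lemma card_hubs : #|[set v : 'I_n | hub v]| = k.
Proof.
rewrite hubs_image card_imset ?card_ord // => s t /(congr1 val) /= st.
by apply: val_inj => /=; lia.
Qed.

Lemma triple_graph_k_connected : k_connected triple_graph k.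
Proof.
split=> [|X X_lt u v uX vX]; first by rewrite card_ord; lia.
have /subsetPn[a a_hub aX] : ~~ ([set v : 'I_n | hub v] \subset X).
  by apply: contraTN X_lt => /subset_leq_card; rewrite card_hubs -leqNgt.
rewrite inE in a_hub.
have to_a w : w \notin X ->
    connect [rel y z | [&& triple_graph y z, y \notin X & z \notin X]] w a.
  move=> wX; have [->|wa] := eqVneq w a; first exact: connect0.
  by apply: connect1; rewrite /= wX aX /triple_graph /= /triple_adj a_hub orbT !andbT.
apply: connect_trans (to_a u uX) _; rewrite sym_connect_sym ?to_a // => y z /=.
by rewrite /triple_graph /= triple_adj_sym [(y \notin X) && _]andbC.
Qed.

(* Vertices [>= 3k] are adjacent only to hubs, and a triple contains only two
   non-hubs, so a non-hub vertex has at most one non-hub neighbour. *)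
Lemma hub_neighbours v u w : triple_adj v u -> triple_adj v w -> u != w ->
  1 + (3 * k <= v) <= hub v + hub u + hub w.
Proof. by rewrite /triple_adj /hub; lia. Qed.

Lemma count_hubs_le c : uniq c -> count (fun v : 'I_n => hub v) c <= k.
Proof.
move=> c_uniq; rewrite -size_filter -(card_uniqP (filter_uniq _ c_uniq)) -card_hubs.
by apply: subset_leq_card; apply/subsetP=> v; rewrite mem_filter inE => /andP[].
Qed.

Lemma triple_cycle_bound c : is_cycle triple_graph c ->
  size c + count (fun v : 'I_n => 3 * k <= v) c <= 3 * k.
Proof.
move=> [/andP[c_cycle c_uniq] c_ge3]; set is_hub := fun v : 'I_n => hub v.
apply: leq_trans (leq_mul (leqnn 3) (count_hubs_le c_uniq)).
have -> : 3 * count is_hub c =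
    count is_hub c + count (preim (next c) is_hub) c + count (preim (prev c) is_hub) c.
  by rewrite count_next ?count_prev //; move: (count _ _) => m; lia.
rewrite -sum1_size !count_sum -!big_split /= big_seq [X in _ <= X]big_seq.
apply: leq_sum => v vc; apply: hub_neighbours.
- exact: (next_cycle c_cycle vc).
- by rewrite triple_adj_sym; apply: (prev_cycle c_cycle vc).
- exact: (next_neq_prev c_uniq c_ge3 vc).
Qed.

Definition low_cycle : seq 'I_n := [seq v : 'I_n <- enum 'I_n | v < 3 * k].

Lemma map_val_low_cycle : map val low_cycle = iota 0 (3 * k).
Proof.
rewrite /low_cycle -(filter_map val (fun i => i < 3 * k)) val_enum_ord.
exact: (filter_iota_ltn 0 k_le).
Qed.

Lemma size_low_cycle : size low_cycle = 3 * k.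
Proof. by rewrite -(size_map val) map_val_low_cycle size_iota. Qed.

Lemma low_cycle_cycle : is_cycle triple_graph low_cycle.
Proof.
split; last by rewrite size_low_cycle; lia.
rewrite /ucycle filter_uniq ?enum_uniq // andbT.
rewrite /triple_graph -cycle_map map_val_low_cycle.
by apply: cycle_iota => [|i i_lt|]; rewrite /triple_adj /hub; lia.
Qed.

Lemma triple_graph_cc : cc triple_graph = 3 * k.
Proof.
apply/eqP; rewrite eqn_leq; apply/andP; split; last first.
  have := cc_lower_bound k_ge2 triple_graph_simple triple_graph_k_connected.
  by rewrite card_ord (minn_idPr k_le).
have [/andP[_ low_uniq] _] := low_cycle_cycle.
rewrite /cc -size_low_cycle -(card_uniqP low_uniq); apply: subset_leq_card.
apply/subsetP=> v; rewrite inE => /asboolP[c [[c_cycle c_max] vc]].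
have := triple_cycle_bound c_cycle; have := c_max _ low_cycle_cycle.
rewrite size_low_cycle => c_ge c_le.
have /hasPn/(_ v vc) : ~~ has (fun v : 'I_n => 3 * k <= v) c.
  by rewrite has_count -leqNgt -(leq_add2l (size c)) addn0 (leq_trans c_le).
by rewrite mem_filter mem_enum andbT ltnNge.
Qed.

End TripleGraph.

Theorem theorem7 (k n : nat) (hk : 2 <= k) (hn : k + 1 <= n) :
  (forall (T : finType) (e : rel T),
      simple_graph e -> #|T| = n -> k_connected e k ->
      minn n (3 * k) <= cc e)
  /\
  (exists e : rel 'I_n,
      simple_graph e /\ k_connected e k /\ cc e = minn n (3 * k)).
Proof.
split=> [T e e_simple <- e_conn|]; first exact: cc_lower_bound.
have [n_le|n_gt] := leqP n (3 * k); last first.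
  exists (@triple_graph n k).
  split; first exact: triple_graph_simple.
  by split; [apply: triple_graph_k_connected | apply: triple_graph_cc]; lia.
have e_conn : k_connected (@complete_graph 'I_n) k.
  by apply: complete_graph_k_connected; rewrite card_ord; lia.
exists (@complete_graph 'I_n); split; first exact: complete_graph_simple.
split=> //; apply/eqP; rewrite eqn_leq; apply/andP; split.
  by rewrite -[X in _ <= X](card_ord n); apply: max_card.
have := cc_lower_bound hk (complete_graph_simple _) e_conn.
by rewrite card_ord (minn_idPl n_le).
Qed.
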